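(* Let $N\geq 10^{100000}$ be a real number, let $f_N(x)=\dfrac{\log N+\log(x-1)}{\log x}$ for real $x>1$, and let $g_{k,N}(x)=(-1)^k f_N^{(k)}(x)$. Define polynomials $P_{1,1}(t)=1$, $P_{2,2}(t)=t+2$, $P_{3,3}(t)=2t^2+6t+6$, $P_{4,4}(t)=6t^3+22t^2+36t+24$, $P_{5,5}(t)=24t^4+100t^3+210t^2+240t+120$, $P_{6,6}(t)=120t^5+548t^4+1350t^3+2040t^2+1800t+720$ (equivalently $P_{1,1}=1$ and $P_{k+1,k+1}(t)=(kt+k+1)P_{k,k}(t)-tP_{k,k}'(t)$). Then for $1\leq k\leq 6$ and $x\geq 10^5$, $$\frac{0.999999\,P_{k,k}(\log x)\log N}{x^k\log^{k+1}x}<g_{k,N}(x)<\frac{P_{k,k}(\log x)\log N}{x^k\log^{k+1}x}.$$ Moreover, for $2\leq k\leq 6$ and $x\geq 10^5$, $$\frac{(k-1)!\log N}{x^k\log^2 x}<g_{k,N}(x)<\frac{\tau_k\log N}{x^k\log^2 x},$$ where $\tau_2=1.17372$, $\tau_3=2.56643$, $\tau_4=8.19823$, $\tau_5=34.4344$, $\tau_6=179.227$; and for $x\geq 10^5$, $$\frac{0.999999\log N}{x\log^2 x}<g_{1,N}(x)<\frac{\log N}{x\log^2 x}.$$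
   Context: $f_N^{(k)}$ denotes the $k$-th derivative of $f_N$ with respect to $x$; $\log$ is the natural logarithm. *)

From Stdlib Require Import Reals.
From Coquelicot Require Import Coquelicot.
Open Scope R_scope.

Definition fN (N x : R) : R := (ln N + ln (x - 1)) / ln x.

Definition gkN (k : nat) (N x : R) : R := (-1) ^ k * Derive_n (fN N) k x.

Definition Pkk (k : nat) (t : R) : R :=
  match k with
  | 1%nat => 1
  | 2%nat => t + 2
  | 3%nat => 2 * t ^ 2 + 6 * t + 6
  | 4%nat => 6 * t ^ 3 + 22 * t ^ 2 + 36 * t + 24
  | 5%nat => 24 * t ^ 4 + 100 * t ^ 3 + 210 * t ^ 2 + 240 * t + 120
  | 6%nat => 120 * t ^ 5 + 548 * t ^ 4 + 1350 * t ^ 3 + 2040 * t ^ 2 + 1800 * t + 720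
  | _ => 0
  end.

Definition tau (k : nat) : R :=
  match k with
  | 2%nat => 117372 / 100000
  | 3%nat => 256643 / 100000
  | 4%nat => 819823 / 100000
  | 5%nat => 344344 / 10000
  | 6%nat => 179227 / 1000
  | _ => 0
  end.

From Stdlib Require Import Reals Lra Lia Psatz List.
From Coquelicot Require Import Coquelicot.
Import ListNotations.
Open Scope R_scope.

(* Write L = ln N, A_k(x) = (-1)^k (1/ln)^(k)(x) = P_{k,k}(ln x) / (x^k ln^(k+1) x)
   ([inv_ln_Dn]) and S_k(x, d) = sum_(j=1..k) C(k,j) (j-1)! A_(k-j)(x) / d^j ([leibniz_sum]).
   By the Leibniz rule g_{k,N}(x) = (L + ln(x-1)) A_k(x) - S_k(x, x-1), and the same formula
   applied to the constant ln x / ln x gives S_k(x, x) = ln x A_k(x).  Hence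
   g_{k,N} = (L - e) A_k with e = ln(x/(x-1)) + (S_k(x, x-1) - S_k(x, x)) / A_k; as S_k has
   positive coefficients, 0 < e and e ln x <= 1 for x >= 10^5.  Since L >= 10^5 ln 10 the
   defect e is negligible, and the estimates
   (k-1)! t^(k-1) + 2 t^(k-2) <= P_{k,k}(t) <= tau_k t^(k-1)  for t >= ln 10^5
   give the bounds in terms of ln^2 x. *)

Lemma ln_gt_0 x : 1 < x -> 0 < ln x.
Proof. intros Hx. rewrite <- ln_1. apply ln_increasing; lra. Qed.

Lemma ln_le_sub1 u : 0 < u -> ln u <= u - 1.
Proof. intros Hu. pose proof (exp_ineq1_le (ln u)). rewrite exp_ln in H by lra. lra. Qed.

(* P_{0,0} = 1 is consistent with the recurrence defining P_{k,k}. *)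
Definition Pk (k : nat) (t : R) : R := match k with 0%nat => 1 | _ => Pkk k t end.

Definition inv_ln_Dn (k : nat) (x : R) : R := Pk k (ln x) / (x ^ k * ln x ^ (k + 1)).

Fixpoint Xhorner (cs : list R) (z : R) : R :=
  match cs with
  | [] => 0
  | c :: cs' => z * (c + Xhorner cs' z)
  end.

(* In the Leibniz expansion of (L + ln(x-a)) / ln x the j-th derivative of ln(x-a) is
   (-1)^(j-1) (j-1)! / (x-a)^j, whence the coefficient C(k,j) (j-1)! of 1 / (x-a)^j. *)
Definition leibniz_coefs (k : nat) (x : R) : list R :=
  match k with
  | 1%nat => [inv_ln_Dn 0 x]
  | 2%nat => [2 * inv_ln_Dn 1 x; inv_ln_Dn 0 x]
  | 3%nat => [3 * inv_ln_Dn 2 x; 3 * inv_ln_Dn 1 x; 2 * inv_ln_Dn 0 x]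
  | 4%nat => [4 * inv_ln_Dn 3 x; 6 * inv_ln_Dn 2 x; 8 * inv_ln_Dn 1 x; 6 * inv_ln_Dn 0 x]
  | 5%nat => [5 * inv_ln_Dn 4 x; 10 * inv_ln_Dn 3 x; 20 * inv_ln_Dn 2 x;
              30 * inv_ln_Dn 1 x; 24 * inv_ln_Dn 0 x]
  | 6%nat => [6 * inv_ln_Dn 5 x; 15 * inv_ln_Dn 4 x; 40 * inv_ln_Dn 3 x;
              90 * inv_ln_Dn 2 x; 144 * inv_ln_Dn 1 x; 120 * inv_ln_Dn 0 x]
  | _ => []
  end.

Definition leibniz_sum (k : nat) (x d : R) : R := Xhorner (leibniz_coefs k x) (/ d).

Definition log_ratio (L a x : R) : R := (L + ln (x - a)) / ln x.

Definition log_ratio_Dn (L a : R) (k : nat) (x : R) : R :=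
  (L + ln (x - a)) * inv_ln_Dn k x - leibniz_sum k x (x - a).

Lemma is_derive_inv_ln_Dn k x : (k < 6)%nat -> 1 < x ->
  is_derive (inv_ln_Dn k) x (- inv_ln_Dn (S k) x).
Proof.
  intros Hk Hx. pose proof (ln_gt_0 x Hx).
  destruct k as [|[|[|[|[|[|k]]]]]]; try lia;
    unfold inv_ln_Dn, Pk, Pkk; simpl; auto_derive; repeat split; try lra;
    try field; repeat split; try lra; apply Rgt_not_eq; repeat apply Rmult_lt_0_compat; lra.
Qed.

Lemma Derive_inv_ln_Dn k x : (k < 6)%nat -> 1 < x ->
  Derive (fun y => inv_ln_Dn k y) x = - inv_ln_Dn (S k) x.
Proof. intros Hk Hx. apply is_derive_unique, is_derive_inv_ln_Dn; assumption. Qed.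

Lemma is_derive_log_ratio_Dn L a k x : (k < 6)%nat -> 0 <= a <= 1 -> 1 < x ->
  is_derive (log_ratio_Dn L a k) x (- log_ratio_Dn L a (S k) x).
Proof.
  intros Hk Ha Hx.
  assert (Hex : forall j, (j < 6)%nat -> ex_derive (inv_ln_Dn j) x).
  { intros j Hj. eexists. apply is_derive_inv_ln_Dn; assumption. }
  destruct k as [|[|[|[|[|[|k]]]]]]; try lia;
    unfold log_ratio_Dn, leibniz_sum, leibniz_coefs, Xhorner; auto_derive;
    repeat split; try lra; try (apply Hex; lia);
    repeat rewrite Derive_inv_ln_Dn by (lia || lra);
    change (x + - a) with (x - a); field; lra.
Qed.

Lemma Derive_n_log_ratio L a k x : (k <= 6)%nat -> 0 <= a <= 1 -> 1 < x ->
  Derive_n (log_ratio L a) k x = (-1) ^ k * log_ratio_Dn L a k x.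
Proof.
  revert x. induction k as [|k IH]; intros x Hk Ha Hx.
  - pose proof (ln_gt_0 x Hx).
    unfold log_ratio, log_ratio_Dn, inv_ln_Dn, leibniz_sum, leibniz_coefs, Pk; simpl.
    field. lra.
  - simpl Derive_n.
    rewrite (Derive_ext_loc _ (fun y => (-1) ^ k * log_ratio_Dn L a k y)).
    + apply is_derive_unique.
      replace ((-1) ^ S k * log_ratio_Dn L a (S k) x)
        with ((-1) ^ k * - log_ratio_Dn L a (S k) x) by (simpl; ring).
      apply is_derive_scal, is_derive_log_ratio_Dn; lia || lra.
    + apply (filter_imp (fun y => 1 < y)); [|apply (open_gt 1); exact Hx].
      intros y Hy. apply IH; lia || lra.
Qed.

(* For L = a = 0 the ratio is constant, so its derivatives vanish. *)
Lemma ln_mul_inv_ln_Dn k x : (1 <= k <= 6)%nat -> 1 < x ->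
  ln x * inv_ln_Dn k x = leibniz_sum k x x.
Proof.
  intros Hk Hx.
  assert (Hc : Derive_n (log_ratio 0 0) k x = 0).
  { destruct k as [|k]; [lia|].
    rewrite (Derive_n_ext_loc _ (fun _ => 1)); [apply Derive_n_const|].
    apply (filter_imp (fun y => 1 < y)); [|apply (open_gt 1); exact Hx].
    intros y Hy. pose proof (ln_gt_0 y Hy). unfold log_ratio.
    replace (y - 0) with y by ring. field. lra. }
  rewrite Derive_n_log_ratio in Hc by (lia || lra).
  apply Rmult_integral in Hc as [Hc | Hc].
  - exfalso. revert Hc. apply pow_nonzero. lra.
  - unfold log_ratio_Dn in Hc. replace (x - 0) with x in Hc by ring. lra.
Qed.

Lemma gkN_eq_log_ratio_Dn k N x : (k <= 6)%nat -> 1 < x ->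
  gkN k N x = log_ratio_Dn (ln N) 1 k x.
Proof.
  intros Hk Hx. unfold gkN. change (fN N) with (log_ratio (ln N) 1).
  rewrite Derive_n_log_ratio by (lia || lra).
  rewrite <- Rmult_assoc, <- Rpow_mult_distr.
  replace (-1 * -1) with 1 by ring. rewrite pow1. ring.
Qed.

Lemma Xhorner_nonneg cs z : List.Forall (Rle 0) cs -> 0 <= z -> 0 <= Xhorner cs z.
Proof.
  intros Hcs Hz. induction Hcs as [|c cs Hc Hcs IH]; simpl; [lra|].
  apply Rmult_le_pos; lra.
Qed.

Lemma Xhorner_le_compat cs z z' : List.Forall (Rle 0) cs -> 0 <= z <= z' ->
  Xhorner cs z <= Xhorner cs z'.
Proof.
  intros Hcs Hz. induction Hcs as [|c cs Hc Hcs IH]; simpl; [lra|].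
  pose proof (Xhorner_nonneg cs z Hcs ltac:(lra)).
  apply Rmult_le_compat; lra.
Qed.

Lemma Xhorner_scale_le cs l z : List.Forall (Rle 0) cs -> 1 <= l -> 0 <= z ->
  Xhorner cs (l * z) <= l ^ length cs * Xhorner cs z.
Proof.
  intros Hcs Hl Hz. induction Hcs as [|c cs Hc Hcs IH]; simpl; [lra|].
  pose proof (Xhorner_nonneg cs z Hcs Hz).
  assert (Hn : 1 <= l ^ length cs) by (apply pow_R1_Rle; lra).
  replace (l * (l ^ length cs) * (z * (c + Xhorner cs z)))
    with ((l * z) * (l ^ length cs * c + l ^ length cs * Xhorner cs z)) by ring.
  apply Rmult_le_compat_l; nra.
Qed.

Lemma Pk_pos k t : (k <= 6)%nat -> 0 < t -> 0 < Pk k t.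
Proof.
  intros Hk Ht.
  destruct k as [|[|[|[|[|[|[|k]]]]]]]; try lia; simpl;
    repeat first [apply Rplus_lt_0_compat | apply Rmult_lt_0_compat | apply pow_lt]; lra.
Qed.

Lemma inv_ln_Dn_pos k x : (k <= 6)%nat -> 1 < x -> 0 < inv_ln_Dn k x.
Proof.
  intros Hk Hx. pose proof (ln_gt_0 x Hx).
  apply Rdiv_lt_0_compat; [now apply Pk_pos|].
  apply Rmult_lt_0_compat; apply pow_lt; lra.
Qed.

Lemma leibniz_coefs_nonneg k x : 1 < x -> List.Forall (Rle 0) (leibniz_coefs k x).
Proof.
  intros Hx.
  assert (H : forall c j, 0 <= c -> (j <= 6)%nat -> 0 <= c * inv_ln_Dn j x).
  { intros c j Hc Hj. pose proof (inv_ln_Dn_pos j x Hj Hx). nra. }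
  destruct k as [|[|[|[|[|[|[|k]]]]]]]; simpl;
    repeat apply List.Forall_cons; try apply List.Forall_nil;
    first [apply H | apply Rlt_le, inv_ln_Dn_pos]; lra || lia.
Qed.

Lemma leibniz_sum_shift_bounds k x : 2 <= x ->
  leibniz_sum k x x <= leibniz_sum k x (x - 1) <=
  (1 + / (x - 1)) ^ 6 * leibniz_sum k x x.
Proof.
  intros Hx. unfold leibniz_sum.
  pose proof (leibniz_coefs_nonneg k x ltac:(lra)) as Hcs.
  set (l := 1 + / (x - 1)).
  assert (Hl : 1 <= l)
    by (assert (0 < / (x - 1)) by (apply Rinv_0_lt_compat; lra); unfold l; lra).
  assert (Hz : / (x - 1) = l * / x) by (unfold l; field; lra).
  assert (Hx0 : 0 <= / x) by (apply Rlt_le, Rinv_0_lt_compat; lra).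
  rewrite Hz. split.
  - apply Xhorner_le_compat; [assumption|]. nra.
  - eapply Rle_trans; [apply Xhorner_scale_le; assumption|].
    apply Rmult_le_compat_r; [now apply Xhorner_nonneg|].
    apply Rle_pow; [assumption|].
    destruct k as [|[|[|[|[|[|[|k]]]]]]]; simpl; lia.
Qed.

Lemma ln_sub_ln_pred x : 1 < x -> ln x - ln (x - 1) <= / (x - 1).
Proof.
  intros Hx. rewrite <- ln_div by lra.
  pose proof (ln_le_sub1 (x / (x - 1)) ltac:(apply Rdiv_lt_0_compat; lra)).
  replace (x / (x - 1) - 1) with (/ (x - 1)) in H by (field; lra). exact H.
Qed.

Lemma ln_sqr_le_sqrt x : 1 <= x -> ln x ^ 2 <= 16 * sqrt x.
Proof.
  intros Hx. set (s := sqrt (sqrt x)).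
  assert (Hs0 : 0 < s) by (apply sqrt_lt_R0, sqrt_lt_R0; lra).
  assert (Hss : s * s = sqrt x) by (apply sqrt_sqrt, sqrt_pos).
  assert (Hx4 : x = s * s * (s * s)) by (rewrite Hss; symmetry; apply sqrt_sqrt; lra).
  assert (Hln : ln x = 4 * ln s) by (rewrite Hx4, !ln_mult; lra || nra).
  assert (0 <= ln x) by (rewrite <- ln_1; apply ln_le; lra).
  pose proof (ln_le_sub1 s Hs0). rewrite <- Hss. nra.
Qed.

Lemma pow6_le_linear u : 0 <= u <= / 100 -> (1 + u) ^ 6 <= 1 + 7 * u.
Proof. intros Hu. nra. Qed.

Definition atanh_taylor (z : R) : R :=
  2 * (z + z ^ 3 / 3 + z ^ 5 / 5 + z ^ 7 / 7 + z ^ 9 / 9 + z ^ 11 / 11 + z ^ 13 / 13).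

(* ln((1+z)/(1-z)) - atanh_taylor z has derivative 2 z^14 / (1 - z^2) >= 0. *)
Lemma atanh_taylor_lt z : 0 < z < 1 ->
  atanh_taylor z - z / 1000000000 < ln ((1 + z) / (1 - z)).
Proof.
  intros Hz.
  set (h y := ln (1 + y) - ln (1 - y) - atanh_taylor y + y / 1000000000).
  assert (Hinc : h 0 < h z).
  { apply (incr_function h (-1) 1 (fun y => 2 * y ^ 14 / (1 - y ^ 2) + / 1000000000));
      try (simpl; lra).
    - intros y H1 H2; simpl in H1, H2. unfold h, atanh_taylor. auto_derive; [lra|].
      assert (y ^ 2 < 1) by nra. field. repeat split; lra.
    - intros y H1 H2; simpl in H1, H2.
      assert (y ^ 2 < 1) by nra.
      assert (0 <= 2 * y ^ 14 / (1 - y ^ 2)).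
      { apply Rdiv_le_0_compat; [|lra]. replace (y ^ 14) with ((y ^ 7) ^ 2) by ring. nra. }
      assert (0 < / 1000000000) by (apply Rinv_0_lt_compat; lra). lra. }
  unfold h, atanh_taylor in Hinc |- *.
  rewrite Rplus_0_r, Rminus_0_r, ln_1, ln_div in * by lra. lra.
Qed.

Lemma ln10_gt : 2302585 / 1000000 < ln 10.
Proof.
  pose proof (atanh_taylor_lt (1 / 3) ltac:(lra)) as H2.
  pose proof (atanh_taylor_lt (1 / 9) ltac:(lra)) as H5.
  replace ((1 + 1 / 3) / (1 - 1 / 3)) with 2 in H2 by field.
  replace ((1 + 1 / 9) / (1 - 1 / 9)) with (5 / 4) in H5 by field.
  replace 10 with (2 ^ 3 * (5 / 4)) by field.
  rewrite ln_mult, ln_pow by lra. simpl INR. unfold atanh_taylor in *. lra.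
Qed.

Lemma ln_ge_of_ge_1e5 x : 100000 <= x -> 11512925 / 1000000 <= ln x.
Proof.
  intros Hx. pose proof ln10_gt.
  assert (ln (10 ^ 5) <= ln x) by (apply ln_le; [apply pow_lt|]; lra).
  rewrite ln_pow in H0 by lra. simpl INR in H0. lra.
Qed.

Lemma ln_ge_of_ge_1e100000 N : powerRZ 10 100000 <= N -> 230000 <= ln N.
Proof.
  intros HN. pose proof ln10_gt.
  rewrite powerRZ_Rpower in HN by lra.
  assert (0 < Rpower 10 (IZR 100000)) by apply exp_pos.
  assert (ln (Rpower 10 (IZR 100000)) <= ln N) by (apply ln_le; lra).
  unfold Rpower in H1. rewrite ln_exp in H1. lra.
Qed.

Lemma inv_pred_mul_ln_le_1 x : 100000 <= x -> / (x - 1) * (ln x + 7 * ln x ^ 2) <= 1.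
Proof.
  intros Hx.
  pose proof (ln_ge_of_ge_1e5 x Hx). pose proof (ln_sqr_le_sqrt x ltac:(lra)).
  assert (Hr : 128 * sqrt x <= x - 1).
  { pose proof (sqrt_sqrt x ltac:(lra)). pose proof (sqrt_pos x). nra. }
  assert (Hu : 0 < / (x - 1)) by (apply Rinv_0_lt_compat; lra).
  assert (Hux : (x - 1) * / (x - 1) = 1) by (field; lra).
  nra.
Qed.

Lemma gkN_defect k N x : (1 <= k <= 6)%nat -> 100000 <= x ->
  exists e, 0 < e /\ e * ln x <= 1 /\ gkN k N x = (ln N - e) * inv_ln_Dn k x.
Proof.
  intros Hk Hx.
  rewrite gkN_eq_log_ratio_Dn by (lia || lra). unfold log_ratio_Dn.
  pose proof (inv_ln_Dn_pos k x ltac:(lia) ltac:(lra)) as HD.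
  pose proof (ln_mul_inv_ln_Dn k x Hk ltac:(lra)) as HS0.
  pose proof (leibniz_sum_shift_bounds k x ltac:(lra)) as [HS1 HS2].
  pose proof (ln_sub_ln_pred x ltac:(lra)) as Hgap.
  pose proof (ln_increasing (x - 1) x ltac:(lra) ltac:(lra)) as Hgap0.
  pose proof (ln_ge_of_ge_1e5 x Hx) as Ht.
  pose proof (inv_pred_mul_ln_le_1 x Hx) as Hsmall.
  set (t := ln x) in *. set (D := inv_ln_Dn k x) in *.
  set (S0 := leibniz_sum k x x) in *. set (S1 := leibniz_sum k x (x - 1)) in *.
  set (u := / (x - 1)) in *.
  assert (Hu : 0 < u <= / 100).
  { unfold u. split; [apply Rinv_0_lt_compat; lra|]. apply Rinv_le_contravar; lra. }
  assert (Hq : (S1 - S0) / D <= 7 * u * t).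
  { apply Rle_div_l; [lra|].
    assert ((1 + u) ^ 6 * S0 <= (1 + 7 * u) * S0)
      by (apply Rmult_le_compat_r; [nra|apply pow6_le_linear; lra]).
    rewrite <- HS0 in *. lra. }
  assert (Hq0 : 0 <= (S1 - S0) / D) by (apply Rdiv_le_0_compat; lra).
  exists (t - ln (x - 1) + (S1 - S0) / D). split; [lra|split].
  - nra.
  - rewrite <- HS0. field. lra.
Qed.

Lemma Pkk_le_tau k t : (2 <= k <= 6)%nat -> 11512925 / 1000000 <= t ->
  Pkk k t <= tau k * t ^ (k - 1).
Proof.
  intros Hk Ht. set (d := t - 11512925 / 1000000).
  assert (0 <= d) by (unfold d; lra).
  assert (0 <= d ^ 2) by (apply pow_le; lra).
  assert (0 <= d ^ 3) by (apply pow_le; lra).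
  assert (0 <= d ^ 4) by (apply pow_le; lra).
  assert (0 <= d ^ 5) by (apply pow_le; lra).
  replace t with (11512925 / 1000000 + d) by (unfold d; ring).
  destruct k as [|[|[|[|[|[|[|k]]]]]]]; try lia; simpl; unfold tau;
    match goal with |- ?a <= ?b => cut (0 <= b - a); [lra|] end;
    ring_simplify; lra.
Qed.

Lemma Pkk_ge k t : (2 <= k <= 6)%nat -> 0 <= t ->
  INR (Factorial.fact (k - 1)) * t ^ (k - 1) + 2 * t ^ (k - 2) <= Pkk k t.
Proof.
  intros Hk Ht.
  assert (0 <= t ^ 2) by (apply pow_le; lra).
  assert (0 <= t ^ 3) by (apply pow_le; lra).
  assert (0 <= t ^ 4) by (apply pow_le; lra).
  destruct k as [|[|[|[|[|[|[|k]]]]]]]; try lia; simpl; lra.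
Qed.

Lemma fact_pred_le_120 k : (1 <= k <= 6)%nat -> 0 < INR (Factorial.fact (k - 1)) <= 120.
Proof. intros Hk. destruct k as [|[|[|[|[|[|[|k]]]]]]]; try lia; simpl; lra. Qed.

Lemma Pkk_defect_bounds k t e L : (2 <= k <= 6)%nat -> 11512925 / 1000000 <= t ->
  0 < e -> e * t <= 1 -> 230000 <= L ->
  INR (Factorial.fact (k - 1)) * L * t ^ (k - 1) < (L - e) * Pkk k t /\
  (L - e) * Pkk k t < tau k * L * t ^ (k - 1).
Proof.
  intros Hk Ht He Het HL.
  pose proof (Pkk_le_tau k t Hk Ht) as Htau.
  pose proof (Pkk_ge k t Hk ltac:(lra)) as Hfact.
  pose proof (fact_pred_le_120 k ltac:(lia)) as HM.
  set (M := INR (Factorial.fact (k - 1))) in *. set (P := Pkk k t) in *.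
  set (v := t ^ (k - 2)) in *.
  assert (Hv : 0 < v) by (apply pow_lt; lra).
  assert (Hk1 : t ^ (k - 1) = t * v)
    by (unfold v; replace (k - 1)%nat with (S (k - 2)) by lia; reflexivity).
  rewrite Hk1 in *.
  assert (He1 : e <= 1) by nra.
  assert (HP : 0 < P) by (assert (0 <= M * (t * v)) by (apply Rmult_le_pos; nra); lra).
  split.
  - assert ((L - e) * (M * (t * v) + 2 * v) <= (L - e) * P)
      by (apply Rmult_le_compat_l; lra).
    assert (e * t * (M * v) <= 1 * (120 * v)) by (apply Rmult_le_compat; nra).
    nra.
  - assert (L * P <= L * (tau k * (t * v))) by (apply Rmult_le_compat_l; lra).
    nra.
Qed.

Lemma Rdiv_lt_compat_r a b c : 0 < c -> a < b -> a / c < b / c.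
Proof. intros Hc Hab. apply Rmult_lt_compat_r; [apply Rinv_0_lt_compat|]; assumption. Qed.

Section Bounds.

Variable N : R.
Hypothesis lnN_ge : 230000 <= ln N.

Lemma gkN_Pkk_bounds k x : (1 <= k <= 6)%nat -> 100000 <= x ->
  999999 / 1000000 * Pkk k (ln x) * ln N / (x ^ k * ln x ^ (k + 1)) < gkN k N x /\
  gkN k N x < Pkk k (ln x) * ln N / (x ^ k * ln x ^ (k + 1)).
Proof.
  intros Hk Hx.
  destruct (gkN_defect k N x Hk Hx) as (e & He & Het & ->).
  pose proof (ln_ge_of_ge_1e5 x Hx).
  pose proof (Pk_pos k (ln x) ltac:(lia) ltac:(lra)) as HP.
  assert (HPk : Pk k (ln x) = Pkk k (ln x)) by (destruct k; [lia|reflexivity]).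
  unfold inv_ln_Dn. rewrite HPk in *.
  assert (HW : 0 < x ^ k * ln x ^ (k + 1)) by (apply Rmult_lt_0_compat; apply pow_lt; lra).
  assert (e < / 10) by nra.
  rewrite Rmult_div_assoc.
  split; apply Rdiv_lt_compat_r; nra.
Qed.

Lemma gkN_fact_tau_bounds k x : (2 <= k <= 6)%nat -> 100000 <= x ->
  INR (Factorial.fact (k - 1)) * ln N / (x ^ k * ln x ^ 2) < gkN k N x /\
  gkN k N x < tau k * ln N / (x ^ k * ln x ^ 2).
Proof.
  intros Hk Hx.
  destruct (gkN_defect k N x ltac:(lia) Hx) as (e & He & Het & ->).
  pose proof (ln_ge_of_ge_1e5 x Hx) as Ht.
  destruct (Pkk_defect_bounds k (ln x) e (ln N) Hk Ht He Het lnN_ge) as [Hlo Hup].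
  assert (HPk : Pk k (ln x) = Pkk k (ln x)) by (destruct k; [lia|reflexivity]).
  unfold inv_ln_Dn. rewrite HPk, Rmult_div_assoc.
  assert (Hxk : 0 < x ^ k) by (apply pow_lt; lra).
  assert (HW : 0 < x ^ k * ln x ^ 2) by (apply Rmult_lt_0_compat; [|apply pow_lt]; lra).
  assert (HT : 0 < ln x ^ (k - 1)) by (apply pow_lt; lra).
  replace (x ^ k * ln x ^ (k + 1)) with (x ^ k * ln x ^ 2 * ln x ^ (k - 1))
    by (rewrite Rmult_assoc, <- pow_add; do 2 f_equal; lia).
  split.
  - replace (INR (Factorial.fact (k - 1)) * ln N / (x ^ k * ln x ^ 2))
      with (INR (Factorial.fact (k - 1)) * ln N * ln x ^ (k - 1)
            / (x ^ k * ln x ^ 2 * ln x ^ (k - 1))) by (field; repeat split; lra).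
    apply Rdiv_lt_compat_r; nra.
  - replace (tau k * ln N / (x ^ k * ln x ^ 2))
      with (tau k * ln N * ln x ^ (k - 1) / (x ^ k * ln x ^ 2 * ln x ^ (k - 1)))
      by (field; repeat split; lra).
    apply Rdiv_lt_compat_r; nra.
Qed.

End Bounds.

Theorem lemma3p1 (N : R) (hN : powerRZ 10 100000 <= N) :
  (forall (k : nat) (x : R), (1 <= k <= 6)%nat -> 10 ^ 5 <= x ->
     (999999 / 1000000) * Pkk k (ln x) * ln N / (x ^ k * (ln x) ^ (k + 1))
       < gkN k N x /\
     gkN k N x < Pkk k (ln x) * ln N / (x ^ k * (ln x) ^ (k + 1))) /\
  (forall (k : nat) (x : R), (2 <= k <= 6)%nat -> 10 ^ 5 <= x ->
     INR (Factorial.fact (k - 1)) * ln N / (x ^ k * (ln x) ^ 2) < gkN k N x /\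
     gkN k N x < tau k * ln N / (x ^ k * (ln x) ^ 2)) /\
  (forall x : R, 10 ^ 5 <= x ->
     (999999 / 1000000) * ln N / (x * (ln x) ^ 2) < gkN 1 N x /\
     gkN 1 N x < ln N / (x * (ln x) ^ 2)).
Proof.
  pose proof (ln_ge_of_ge_1e100000 N hN) as HL.
  replace (10 ^ 5) with 100000 by ring.
  split; [|split].
  - intros k x Hk Hx. now apply gkN_Pkk_bounds.
  - intros k x Hk Hx. now apply gkN_fact_tau_bounds.
  - intros x Hx.
    destruct (gkN_Pkk_bounds N HL 1 x ltac:(lia) Hx) as [Hlo Hup].
    simpl Pkk in Hlo, Hup.
    replace (x ^ 1 * ln x ^ (1 + 1)) with (x * ln x ^ 2) in Hlo, Hup by (simpl; ring).
    split; lra.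
Qed.
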